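(* Let $\bm x \in \Delta_n \setminus \{\bm e_1,\dots,\bm e_n, \tfrac1n \bm e\}$. Then the function $F(p) = \dfrac{1 - \|\bm x\|_p}{D_p\,\|\bm x\|_p}$ is strictly decreasing in $p$ for $p \geqslant 2$.
   Context: For $\bm x \in \mathbb{R}^n_{\geqslant 0}$ and real $p\geqslant 1$, $\|\bm x\|_p = (\sum_{i=1}^n x_i^p)^{1/p}$, and $D_p = n^{1-1/p}-1$. $\Delta_n = \{\bm x \in \mathbb{R}^n_{\geqslant 0} : \sum_{i=1}^n x_i = 1\}$ is the probability simplex, $\bm e_i$ is the $i$-th standard unit vector and $\bm e$ the all-ones vector in $\mathbb{R}^n$. *)

From mathcomp Require Import all_boot all_order all_algebra.
From mathcomp Require Import all_classical all_reals all_analysis.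
Set Implicit Arguments. Unset Strict Implicit. Unset Printing Implicit Defensive.
Import Order.TTheory GRing.Theory Num.Theory.
Local Open Scope ring_scope.

Definition pnorm (R : realType) (n : nat) (p : R) (x : 'I_n -> R) : R :=
  (\sum_(i < n) x i `^ p) `^ p^-1.

Definition Dp (R : realType) (n : nat) (p : R) : R :=
  (n%:R) `^ (1 - p^-1) - 1.

Definition in_simplex (R : realType) (n : nat) (x : 'I_n -> R) : Prop :=
  (forall i, 0 <= x i) /\ \sum_(i < n) x i = 1.

Definition unit_vec (R : realType) (n : nat) (i : 'I_n) : 'I_n -> R :=
  fun j => if j == i then 1 else 0.

Definition Ffun (R : realType) (n : nat) (x : 'I_n -> R) (p : R) : R :=
  (1 - pnorm p x) / (Dp n p * pnorm p x).

From mathcomp Require Import all_boot all_order all_algebra.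
From mathcomp Require Import all_classical all_reals all_analysis.
From mathcomp Require Import ring lra.
Import Order.TTheory GRing.Theory Num.Theory.
Local Open Scope ring_scope.

(* Let S_p = sum_i x_i^p and let H_p = ln S_p / (1 - p) be the Renyi entropy of x.  With
   a = 1 - 1/p one has F(p) = (e^(a H_p) - 1) / (e^(a ln n) - 1).  Off the vertices and the
   barycentre, Bernoulli's inequality gives 0 < H_p < ln n for p > 1, and weighted AM-GM makes
   p |-> ln S_p convex, so H_p is nonincreasing.  For fixed 0 < w < ln n the ratio
   (e^(a w) - 1) / (e^(a ln n) - 1) is the slope of the chord of the strictly concave map
   z |-> z^(w / ln n) from 1 to e^(a ln n), hence strictly decreasing in a. *)

Section PowR.
Context {R : realType}.
Implicit Types a b r z c t : R.

Lemma gt0_powRE a r : 0 < a -> a `^ r = expR (r * ln a).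
Proof. by move=> a0; rewrite /powR gt_eqF. Qed.

Lemma powRV a r : 0 <= a -> a^-1 `^ r = (a `^ r)^-1.
Proof. by move=> a0; rewrite -powR_inv1 // -powRrM mulN1r powRN. Qed.

Lemma bernoulli_powR_lt r z : 1 < r -> 0 <= z -> z != 1 -> 1 + r * (z - 1) < z `^ r.
Proof.
move=> r1 z0 z1; have [->|zn0] := eqVneq z 0.
  by rewrite powR0 ?gt_eqF ?(lt_trans ltr01) //; lra.
have zp : 0 < z by rewrite lt_neqAle eq_sym zn0.
rewrite gt0_powRE // -{1}(lnK zp); set y := ln z.
have y0 : y != 0 by rewrite ln_eq0.
have tangent : 1 + (r - 1) * y < expR ((r - 1) * y).
  by rewrite expR_gt1Dx // mulf_neq0 // subr_eq0 gt_eqF.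
have : expR y * (1 - y) <= 1.
  by rewrite -[X in _ <= X](expRxMexpNx_1 y) ler_wpM2l ?expR_ge0 ?expR_ge1Dx.
rewrite (_ : r * y = y + (r - 1) * y); last by ring.
rewrite expRD; move: tangent; rewrite -(ltr_pM2l (expR_gt0 y)).
set E := expR y => tangent le1.
have : 0 <= (r - 1) * (1 - E * (1 - y)) by apply: mulr_ge0; rewrite subr_ge0 // ltW.
nra.
Qed.

Lemma bernoulli_powR_le r z : 1 <= r -> 0 <= z -> 1 + r * (z - 1) <= z `^ r.
Proof.
rewrite le_eqVlt => /predU1P[<- z0|r1 z0]; first by rewrite powRr1 // mul1r addrC subrK.
have [->|z1] := eqVneq z 1; first by rewrite powR1 subrr mulr0 addr0.
exact/ltW/bernoulli_powR_lt.
Qed.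

Lemma bernoulli_powR_gt c z : 0 < c < 1 -> 0 <= z -> z != 1 -> z `^ c < 1 + c * (z - 1).
Proof.
move=> /andP[c0 c1] z0 z1.
have zc1 : z `^ c != 1 by rewrite powR_eq1 negb_or z1 ltNge z0 gt_eqF.
have := @bernoulli_powR_lt c^-1 _ _ (powR_ge0 z c) zc1.
rewrite -powRrM mulfV ?gt_eqF // powRr1 // invf_gt1 // => /(_ c1).
rewrite -(ltr_pM2l c0) mulrDr mulr1 mulrA mulfV ?gt_eqF // mul1r; lra.
Qed.

Lemma concave_powR_lt c a b t : 0 < c < 1 -> 0 <= a -> 0 <= b -> a != b -> 0 < t < 1 ->
  (1 - t) * a `^ c + t * b `^ c < ((1 - t) * a + t * b) `^ c.
Proof.
move=> c01 a0 b0 ab /andP[t0 t1]; set m := (1 - t) * a + t * b.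
have m0 : 0 < m.
  have [a_0|a_neq0] := eqVneq a 0.
    rewrite /m a_0 mulr0 add0r mulr_gt0 // lt_neqAle b0 andbT.
    by apply: contraNneq ab => <-; rewrite a_0.
  have : 0 < a by rewrite lt_neqAle eq_sym a_neq0.
  rewrite /m; nra.
have mc0 : 0 < m `^ c by rewrite powR_gt0.
have tangent z : 0 <= z -> z != m -> m * z `^ c < m * m `^ c + c * m `^ c * (z - m).
  move=> z0 zm; have zm1 : z / m != 1.
    by apply: contra zm => /eqP zm1; rewrite -[z](divfK (lt0r_neq0 m0)) zm1 mul1r.
  have := bernoulli_powR_gt _ _ c01 (divr_ge0 z0 (ltW m0)) zm1.
  rewrite powRM ?invr_ge0 ?(ltW m0) // powRV ?(ltW m0) //.
  rewrite -(ltr_pM2l (mulr_gt0 m0 mc0)).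
  have -> : m * m `^ c * (z `^ c * (m `^ c)^-1) = m * z `^ c by field; rewrite gt_eqF.
  have -> : m * m `^ c * (1 + c * (z / m - 1)) = m * m `^ c + c * m `^ c * (z - m).
    by field; rewrite gt_eqF.
  by [].
have am : a != m.
  rewrite -subr_eq0 (_ : a - m = t * (a - b)); last by rewrite /m; ring.
  by apply: mulf_neq0; rewrite ?subr_eq0 // lt0r_neq0.
have bm : b != m.
  rewrite -subr_eq0 (_ : b - m = (1 - t) * (b - a)); last by rewrite /m; ring.
  by apply: mulf_neq0; [rewrite lt0r_neq0 // subr_gt0 | rewrite subr_eq0 eq_sym].
have ha : (1 - t) * (m * a `^ c) < (1 - t) * (m * m `^ c + c * m `^ c * (a - m)).
  by rewrite ltr_pM2l ?subr_gt0 ?tangent.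
have hb : t * (m * b `^ c) < t * (m * m `^ c + c * m `^ c * (b - m)).
  by rewrite ltr_pM2l ?tangent.
have em : (1 - t) * a + t * b = m by [].
rewrite -(ltr_pM2l m0); nra.
Qed.

Lemma powR_chord_slope_lt c X Y : 0 < c < 1 -> 1 < X -> X < Y ->
  (Y `^ c - 1) / (Y - 1) < (X `^ c - 1) / (X - 1).
Proof.
move=> c01 X1 XY; have Y1 := lt_trans X1 XY.
set t := (X - 1) / (Y - 1).
have t0 : 0 < t by rewrite divr_gt0 ?subr_gt0.
have t1 : t < 1 by rewrite ltr_pdivrMr ?subr_gt0 // mul1r ltrD2r.
have := concave_powR_lt _ _ _ _ c01 ler01 (ltW (lt_trans ltr01 Y1)) (negbT (lt_eqF Y1))
  (introT andP (conj t0 t1)).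
rewrite (_ : (1 - t) * 1 + t * Y = X); last by rewrite /t; field; rewrite gt_eqF ?subr_gt0.
rewrite powR1 mulr1 => concavity.
have -> : (Y `^ c - 1) / (Y - 1) = t * (Y `^ c - 1) / (X - 1).
  by rewrite /t; field; rewrite !gt_eqF ?subr_gt0.
by rewrite ltr_pM2r ?invr_gt0 ?subr_gt0 //; lra.
Qed.

Lemma expR_ratio_lt w u a b : 0 < w -> w < u -> 0 < a -> a < b ->
  (expR (b * w) - 1) / (expR (b * u) - 1) < (expR (a * w) - 1) / (expR (a * u) - 1).
Proof.
move=> w0 wu a0 ab; have u0 := lt_trans w0 wu.
have expR_pow s : expR (s * w) = expR (s * u) `^ (w / u).
  by rewrite -expRM; congr expR; field; rewrite gt_eqF.
rewrite !expR_pow; apply: powR_chord_slope_lt.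
- by rewrite divr_gt0 //= ltr_pdivrMr // mul1r.
- by rewrite expR_gt1 mulr_gt0.
- by rewrite ltr_expR ltr_pM2r.
Qed.

Lemma powR_geo_le_arith t a b : 0 <= a -> 0 <= b -> 0 < t < 1 ->
  a `^ (1 - t) * b `^ t <= (1 - t) * a + t * b.
Proof.
move=> a0 b0 /andP[t0 t1]; have t1' : 0 < 1 - t by rewrite subr_gt0.
have conj : (1 - t)^-1^-1 + t^-1^-1 = 1 by rewrite !invrK subrK.
have := conjugate_powR (powR_ge0 a (1 - t)) (powR_ge0 b t) _ _ conj.
rewrite !invr_gt0 -!powRrM !mulfV ?gt_eqF // !powRr1 // !invrK => /(_ t1' t0).
by rewrite [a * _]mulrC [b * _]mulrC.
Qed.

End PowR.

Lemma ler_lt_sum {R : numDomainType} {I : finType} {F G : I -> R} i :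
  (forall j, F j <= G j) -> F i < G i -> \sum_j F j < \sum_j G j.
Proof.
move=> FG FGi; rewrite (bigD1 i) //= [X in _ < X](bigD1 i) //=.
by apply: ltr_leD => //; apply: ler_sum => j _.
Qed.

Definition renyi_entropy {R : realType} {n : nat} (x : 'I_n -> R) (p : R) : R :=
  ln (\sum_i x i `^ p) / (1 - p).

Section Simplex.
Context {R : realType} {n : nat} {x : 'I_n -> R}.
Hypotheses (x_ge0 : forall i, 0 <= x i) (x_sum1 : \sum_i x i = 1).

Lemma simplex_le1 i : x i <= 1.
Proof. by rewrite -x_sum1 (bigD1 i) //= lerDl sumr_ge0. Qed.

Lemma simplex_exists_gt0 : exists i, 0 < x i.
Proof.
apply: contrapT => /forallNP x_le0.
have : \sum_i x i = 0.
  by apply: big1 => i _; apply/eqP; rewrite eq_le x_ge0 andbT leNgt; apply/negP.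
by rewrite x_sum1 => /eqP; rewrite oner_eq0.
Qed.

Lemma simplex_n_gt0 : (0 < n)%N.
Proof. by have [[i i_lt] _] := simplex_exists_gt0; apply: leq_ltn_trans i_lt. Qed.

Lemma simplex_unit_vec i : x i = 1 -> x = @unit_vec R n i.
Proof.
move=> xi1; have rest0 : \sum_(j | j != i) x j = 0.
  by move: x_sum1; rewrite (bigD1 i) //= xi1; lra.
apply: funext => j; rewrite /unit_vec; case: eqP => [->//|/eqP ji].
exact: (psumr_eq0P (fun k _ => x_ge0 k) rest0).
Qed.

Lemma powsum_gt0 r : 0 < \sum_i x i `^ r.
Proof.
have [i xi0] := simplex_exists_gt0.
rewrite (bigD1 i) //=; apply: ltr_pwDl; first exact: powR_gt0.
by apply: sumr_ge0 => j _; apply: powR_ge0.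
Qed.

Lemma powsum_lt1 r : (forall i, x <> @unit_vec R n i) -> 1 < r -> \sum_i x i `^ r < 1.
Proof.
move=> not_vertex r1; have [i xi0] := simplex_exists_gt0.
have xi1 : x i < 1.
  by rewrite lt_neqAle simplex_le1 andbT; apply/eqP => /simplex_unit_vec; apply: not_vertex.
rewrite -[X in _ < X]x_sum1; apply: (ler_lt_sum i) => [j|].
  have [->|xj0] := eqVneq (x j) 0; first by rewrite powR0 // gt_eqF // (lt_trans ltr01).
  by rewrite ge1r_powR ?(ltW r1) // lt_neqAle eq_sym xj0 x_ge0 simplex_le1.
rewrite gt0_powRE // -[X in _ < X]lnK ?posrE // ltr_expR gtr_nMl //.
by rewrite ln_lt0 // xi0 xi1.
Qed.

Lemma powsum_gt_uniform r : x <> (fun=> n%:R^-1) -> 1 < r -> n%:R `^ (1 - r) < \sum_i x i `^ r.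
Proof.
move=> not_unif r1; have n0 : 0 < n%:R :> R by rewrite ltr0n simplex_n_gt0.
have /existsNP[i /eqP nxi] : ~ (forall i, n%:R * x i = 1).
  move=> nx1; apply: not_unif; apply: funext => j.
  by rewrite -[x j](mulKf (lt0r_neq0 n0)) nx1 mulr1.
have := ler_lt_sum i (fun j => bernoulli_powR_le _ _ (ltW r1) (mulr_ge0 (ler0n R n) (x_ge0 j)))
  (bernoulli_powR_lt _ _ r1 (mulr_ge0 (ler0n R n) (x_ge0 i)) nxi).
have -> : \sum_j (1 + r * (n%:R * x j - 1)) = n%:R.
  rewrite (eq_bigr (fun j => (1 - r) + (r * n%:R) * x j)); last by move=> j _; ring.
  rewrite big_split /= -mulr_sumr x_sum1 sumr_const card_ord -mulr_natr; ring.
under eq_bigr do rewrite powRM ?ler0n ?x_ge0 //.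
rewrite -mulr_sumr powRB ?pnatr_eq0 -?lt0n ?simplex_n_gt0 ?implybT // powRr1 ?ler0n //.
by rewrite ltr_pdivrMr ?powR_gt0 // mulrC.
Qed.

Lemma powsum_log_convex q t : 0 < q -> 0 < t < 1 ->
  \sum_i x i `^ (1 - t + t * q) <= (\sum_i x i `^ q) `^ t.
Proof.
move=> q0 t01; have /andP[t0 t1] := t01.
set T := \sum_i x i `^ q; have T0 : 0 < T := powsum_gt0 q.
have e0 : 1 - t + t * q != 0 by rewrite gt_eqF // addr_gt0 ?mulr_gt0 ?subr_gt0.
have term i : x i `^ (1 - t + t * q) / T `^ t <= (1 - t) * x i + t * (x i `^ q / T).
  rewrite powRD; last by rewrite (negbTE e0).
  have -> : x i `^ (1 - t) * x i `^ (t * q) / T `^ t = x i `^ (1 - t) * (x i `^ q / T) `^ t.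
    by rewrite powRM ?powR_ge0 ?invr_ge0 ?(ltW T0) // powRV ?(ltW T0) // -powRrM (mulrC t q) mulrA.
  by apply: powR_geo_le_arith; rewrite ?divr_ge0 ?powR_ge0 ?(ltW T0).
rewrite -[X in _ <= X]mul1r -ler_pdivrMr ?powR_gt0 // mulr_suml.
apply: le_trans (ler_sum _ (fun i _ => term i)) _.
rewrite big_split /= -!mulr_sumr -mulr_suml x_sum1 -/T mulfV ?gt_eqF //.
by rewrite !mulr1 subrK.
Qed.

Lemma renyi_entropy_gt0 p : (forall i, x <> @unit_vec R n i) -> 1 < p ->
  0 < renyi_entropy x p.
Proof.
move=> not_vertex p1; rewrite /renyi_entropy -divrNN divr_gt0 // oppr_gt0 ?subr_lt0 //.
by rewrite ln_lt0 // powsum_gt0 powsum_lt1.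
Qed.

Lemma renyi_entropy_lt_ln p : x <> (fun=> n%:R^-1) -> 1 < p ->
  renyi_entropy x p < ln n%:R.
Proof.
move=> not_unif p1; rewrite /renyi_entropy ltr_ndivrMr ?subr_lt0 //.
rewrite mulrC -ln_powR ltr_ln ?posrE ?powsum_gt0 ?powsum_gt_uniform //.
by rewrite powR_gt0 // ltr0n simplex_n_gt0.
Qed.

Lemma renyi_entropy_le p q : 1 < p -> p < q -> renyi_entropy x q <= renyi_entropy x p.
Proof.
move=> p1 pq; have q1 := lt_trans p1 pq.
set t := (p - 1) / (q - 1).
have t01 : 0 < t < 1.
  by rewrite divr_gt0 ?subr_gt0 //= ltr_pdivrMr ?subr_gt0 // mul1r ltrD2r.
have le_ln : ln (\sum_i x i `^ p) <= t * ln (\sum_i x i `^ q).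
  rewrite -ln_powR ler_ln ?posrE ?powR_gt0 ?powsum_gt0 //.
  have := powsum_log_convex q t (lt_trans ltr01 q1) t01.
  by rewrite (_ : 1 - t + t * q = p) // /t; field; rewrite gt_eqF ?subr_gt0.
rewrite /renyi_entropy ler_ndivlMr ?subr_lt0 //.
rewrite (_ : _ / (1 - q) * (1 - p) = t * ln (\sum_i x i `^ q)) //.
by rewrite /t; field; rewrite gt_eqF ?lt_eqF ?subr_gt0 ?subr_lt0.
Qed.

Lemma FfunE p : p != 0 -> p != 1 ->
  Ffun x p = (expR ((1 - p^-1) * renyi_entropy x p) - 1) / (expR ((1 - p^-1) * ln n%:R) - 1).
Proof.
move=> p0 p1; rewrite /Ffun /pnorm /Dp /renyi_entropy.
rewrite !gt0_powRE ?powsum_gt0 ?ltr0n ?simplex_n_gt0 //.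
set D := expR ((1 - p^-1) * ln n%:R) - 1.
(* [D = 0] only for [n = 1], where both sides are [0] by the [x / 0 = 0] convention. *)
have [->|D0] := eqVneq D 0; first by rewrite !mul0r !invr0 !mulr0.
rewrite (_ : (1 - p^-1) * _ = - (p^-1 * ln (\sum_i x i `^ p))); last first.
  by field; rewrite p0 subr_eq0 eq_sym.
by rewrite expRN; field; rewrite D0 gt_eqF ?expR_gt0.
Qed.

End Simplex.

Theorem proposition4 (R : realType) (n : nat) (x : 'I_n -> R) :
  in_simplex x ->
  (forall i : 'I_n, x <> @unit_vec R n i) ->
  x <> (fun _ => n%:R^-1) ->
  forall p q : R, 2 <= p -> p < q -> Ffun x q < Ffun x p.
Proof.
move=> [x_ge0 x_sum1] not_vertex not_unif p q p2 pq.
have p1 : 1 < p by apply: lt_le_trans p2; rewrite ltr1n.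
have q1 := lt_trans p1 pq.
rewrite !(FfunE x_ge0 x_sum1) ?gt_eqF ?(lt_trans ltr01) //.
have H_gt0 := renyi_entropy_gt0 x_ge0 x_sum1 p not_vertex p1.
have H_lt_ln := renyi_entropy_lt_ln x_ge0 x_sum1 p not_unif p1.
have a0 : 0 < 1 - p^-1 by rewrite subr_gt0 invf_lt1 ?(lt_trans ltr01).
have ab : 1 - p^-1 < 1 - q^-1 by rewrite ltrD2l ltrN2 ltf_pV2 ?posrE ?(lt_trans ltr01).
have b0 := lt_trans a0 ab.
apply: le_lt_trans (expR_ratio_lt _ _ _ _ H_gt0 H_lt_ln a0 ab).
rewrite ler_pM2r ?invr_gt0 ?subr_gt0 ?expR_gt1 ?mulr_gt0 ?(lt_trans H_gt0 H_lt_ln) //.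
by rewrite lerD2r ler_expR ler_pM2l // (renyi_entropy_le x_ge0 x_sum1).
Qed.
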